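(* Let $\mathcal{B}=\langle V,F,E\rangle$ be a finite bipartite graph and $W\subseteq V$ such that the subgraph of $\mathcal{B}$ induced by $(V\cup F)\setminus W$ is self-contained. Let $S=S_F\cup S_V$ be a cluster of the causal ordering graph $\mathrm{CO}(\mathcal{B})$ with $S\cap W=\emptyset$, where $S_F=S\cap F$ and $S_V=S\cap V$, and consider the perfect intervention $\mathrm{do}(S_F,S_V)$. Then the subgraph of $\mathcal{B}_{\mathrm{do}(S_F,S_V)}$ induced by $(V\cup F)\setminus W$ is self-contained.
   Context: $\mathrm{adj}_{\mathcal{B}}(X)$ is the set of vertices adjacent to some vertex of $X$. $F'\subseteq F$ is self-contained if $|F'|=|\mathrm{adj}_{\mathcal{B}}(F')|$ and $|F''|\le|\mathrm{adj}_{\mathcal{B}}(F'')|$ for all $F''\subseteq F'$; a bipartite graph is self-contained if both sides have equal size and the constraint side is self-contained; minimal self-contained = non-empty self-contained with no non-empty strict self-contained subset. Causal ordering graph $\mathrm{CO}(\mathcal{B})=\langle\mathcal{V},\mathcal{E}\rangle$ (Algorithm 1): start with $\mathcal{E}=\emptyset$, $\mathcal{V}=\{\{w\}:w\in W\}$, $\mathcal{B}'=\langle V',F',E'\rangle$ the subgraph induced by $(V\setminus W)\cup F$; while $\mathcal{B}'$ is non-null: choose a minimal self-contained set $S'_F$ of $\mathcal{B}'$, let $C=S'_F\cup\mathrm{adj}_{\mathcal{B}'}(S'_F)$, add $C$ to $\mathcal{V}$, add $v\to C$ for each $v\in\mathrm{adj}_{\mathcal{B}}(S'_F)\setminus\mathrm{adj}_{\mathcal{B}'}(S'_F)$,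 and replace $\mathcal{B}'$ by its subgraph induced by $(V'\cup F')\setminus C$. For such a cluster $S$ with $S\cap W=\emptyset$ one has $|S\cap F|=|S\cap V|=n$. Perfect intervention on the bipartite graph: enumerate $S_F=(f_1,\dots,f_n)$ and $S_V=(v_1,\dots,v_n)$; $\mathcal{B}_{\mathrm{do}(S_F,S_V)}=\langle V,F,E'\rangle$ where $E'$ consists of all edges of $E$ not incident to any $f_i$, together with the edges $(v_i-f_i)$, $i=1,\dots,n$. *)

From mathcomp Require Import all_boot.
Set Implicit Arguments. Unset Strict Implicit. Unset Printing Implicit Defensive.

(* Induced subgraphs are described by a pair of vertex
   sets (Vs, Fs). *)

Section Bip.
Variables (V F : finType) (E : F -> V -> bool).

Definition adj (Vs : {set V}) (X : {set F}) : {set V} :=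
  [set v in Vs | [exists f in X, E f v]].

Definition self_contained_set (Vs : {set V}) (Fs : {set F}) (X : {set F}) : bool :=
  [&& X \subset Fs, #|X| == #|adj Vs X|
    & [forall Y : {set F}, (Y \subset X) ==> (#|Y| <= #|adj Vs Y|)]].

Definition self_contained_graph (Vs : {set V}) (Fs : {set F}) : bool :=
  (#|Vs| == #|Fs|) && self_contained_set Vs Fs Fs.

Definition min_self_contained (Vs : {set V}) (Fs : {set F}) (X : {set F}) : bool :=
  [&& X != set0, self_contained_set Vs Fs X
    & [forall Y : {set F}, ((Y != set0) && (Y \proper X)) ==> ~~ self_contained_set Vs Fs Y]].

(* Complete runs of Algorithm 1 on the current graph B' (induced by Vs \cup Fs):
   the sequence of clusters C = (adj_{B'}(S'_F), S'_F) added, in order, until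
   B' is null.  The choice of minimal self-contained set is arbitrary. *)
Inductive CO_run : {set V} -> {set F} -> seq ({set V} * {set F}) -> Prop :=
| CO_nil : CO_run set0 set0 [::]
| CO_cons (Vs : {set V}) (Fs : {set F}) (S : {set F}) r :
    (Vs != set0) || (Fs != set0) ->
    min_self_contained Vs Fs S ->
    CO_run (Vs :\: adj Vs S) (Fs :\: S) r ->
    CO_run Vs Fs ((adj Vs S, S) :: r).

(* Perfect intervention do(S_F, S_V), with enumeration given by a bijection
   p : S_F -> S_V (f_i |-> v_i): edges at f in S_F are replaced by f - p f. *)
Definition intervene (SF : {set F}) (p : F -> V) : F -> V -> bool :=
  fun f v => if f \in SF then v == p f else E f v.

End Bip.

From mathcomp Require Import all_boot zify.
Set Implicit Arguments. Unset Strict Implicit. Unset Printing Implicit Defensive.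

(* Self-containedness is Hall's condition |Y| <= |adj Y| on every set of
   constraints, plus a count. Hall's condition survives the removal of a tight
   set S (|S| = |adj S|), and it can be glued back from the bipartite pieces
   (adj S, S) and the rest, since the two adjacency sets are disjoint. Along a
   run of the causal ordering algorithm, the intervened cluster is either the
   cluster being removed, where the new edges f - p f form a perfect matching,
   or lies in the residual graph, where induction applies; on the other piece
   the intervention changes no edge. *)

Section Hall.
Variables (V F : finType) (E : F -> V -> bool).

Definition hall (Vs : {set V}) (Fs : {set F}) :=
  forall Y : {set F}, Y \subset Fs -> #|Y| <= #|adj E Vs Y|.

Lemma adj_subset (Vs : {set V}) (X : {set F}) : adj E Vs X \subset Vs.
Proof. by apply/subsetP => v; rewrite inE => /andP[]. Qed.

Lemma adjS (Vs1 Vs2 : {set V}) (X1 X2 : {set F}) :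
  Vs1 \subset Vs2 -> X1 \subset X2 -> adj E Vs1 X1 \subset adj E Vs2 X2.
Proof.
move=> /subsetP sV /subsetP sX; apply/subsetP => v.
rewrite !inE => /andP[/sV -> /existsP[f /andP[/sX fX2 efv]]].
by apply/existsP; exists f; rewrite fX2.
Qed.

Lemma adjU (Vs : {set V}) (X1 X2 : {set F}) :
  adj E Vs (X1 :|: X2) = adj E Vs X1 :|: adj E Vs X2.
Proof.
apply/setP => v; rewrite !inE -andb_orr; congr (_ && _).
apply/existsP/orP => [[f /andP[]]|[] /existsP[f /andP[fX efv]]].
- by rewrite inE => /orP[] fX efv; [left|right]; apply/existsP; exists f; rewrite fX.
- by exists f; rewrite inE fX.
- by exists f; rewrite inE fX orbT.
Qed.

Lemma adj_setD (Vs : {set V}) (S Y : {set F}) :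
  adj E (Vs :\: adj E Vs S) Y = adj E Vs Y :\: adj E Vs S.
Proof.
apply/setP => v; rewrite !inE.
by case: (v \in Vs); rewrite ?andbF //= andbT; case: [exists f in S, E f v].
Qed.

Lemma hall_adj (Vs : {set V}) (Fs S : {set F}) :
  hall Vs Fs -> S \subset Fs -> hall (adj E Vs S) S.
Proof.
move=> hallVF sSF Y sYS; apply: leq_trans (hallVF Y (subset_trans sYS sSF)) _.
apply/subset_leq_card/subsetP => v vY; rewrite inE (subsetP (adjS _ sYS) v vY) //.
by move: vY; rewrite inE => /andP[].
Qed.

Lemma hall_setD (Vs : {set V}) (Fs S : {set F}) :
  hall Vs Fs -> S \subset Fs -> #|S| = #|adj E Vs S| ->
  hall (Vs :\: adj E Vs S) (Fs :\: S).
Proof.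
move=> hallVF sSF tightS Y; rewrite subsetD => /andP[sYF dYS].
have := hallVF (Y :|: S); rewrite subUset sYF sSF => /(_ isT).
rewrite adjU !cardsU (disjoint_setI0 dYS) cards0 subn0 adj_setD cardsD.
have := subset_leq_card (subsetIr (adj E Vs Y) (adj E Vs S)).
have := subset_leq_card (subsetIl (adj E Vs Y) (adj E Vs S)).
lia.
Qed.

Lemma hall_glue (Vs A : {set V}) (Fs S : {set F}) :
  A \subset Vs -> S \subset Fs -> hall A S -> hall (Vs :\: A) (Fs :\: S) ->
  hall Vs Fs.
Proof.
move=> sAV sSF hallA hallD Y sYF.
have sYS : Y :&: S \subset S by apply: subsetIr.
have sYD : Y :\: S \subset Fs :\: S by apply: setSD.
have disj : [disjoint adj E A (Y :&: S) & adj E (Vs :\: A) (Y :\: S)].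
  apply: disjointWl (adj_subset _ _) _; apply: disjointWr (adj_subset _ _) _.
  by rewrite disjoints_subset setCD subsetUr.
have sub : adj E A (Y :&: S) :|: adj E (Vs :\: A) (Y :\: S) \subset adj E Vs Y.
  by rewrite subUset !adjS ?subsetIl ?subsetDl.
rewrite -(cardsID S Y); apply: leq_trans (subset_leq_card sub).
rewrite cardsU (disjoint_setI0 disj) cards0 subn0.
exact: leq_add (hallA _ sYS) (hallD _ sYD).
Qed.

Lemma self_contained_graphP (Vs : {set V}) (Fs : {set F}) :
  reflect (#|Vs| = #|Fs| /\ hall Vs Fs) (self_contained_graph E Vs Fs).
Proof.
apply: (iffP andP) => [[/eqP cardVF /and3P[_ _ /forallP allY]]|[cardVF hallVF]].
  by split=> // Y sYF; have /implyP := allY Y; apply.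
rewrite cardVF eqxx; split=> //; apply/and3P; split=> //.
  by rewrite eqn_leq hallVF // -cardVF; apply/subset_leq_card/adj_subset.
by apply/forallP => Y; apply/implyP/hallVF.
Qed.

End Hall.

Section Intervention.
Variables (V F : finType) (E : F -> V -> bool).

Lemma hall_intervene_disjoint (SF : {set F}) (p : F -> V) (Vs : {set V}) (Fs : {set F}) :
  [disjoint Fs & SF] -> hall E Vs Fs -> hall (intervene E SF p) Vs Fs.
Proof.
move=> dFS hallVF Y sYF.
suff -> : adj (intervene E SF p) Vs Y = adj E Vs Y by apply: hallVF.
apply/setP => v; rewrite !inE; congr (_ && _); apply: eq_existsb => f.
rewrite /intervene; case fY: (f \in Y) => //=.
by rewrite (disjointFr dFS (subsetP sYF f fY)).
Qed.

Lemma hall_intervene_matching (S : {set F}) (p : F -> V) :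
  {in S &, injective p} -> hall (intervene E S p) (p @: S) S.
Proof.
move=> injp Y sYS; rewrite -(card_in_imset (sub_in2 (subsetP sYS) injp)).
apply/subset_leq_card/subsetP => _ /imsetP[f fY ->].
rewrite inE imset_f ?(subsetP sYS) //=.
by apply/existsP; exists f; rewrite fY /intervene (subsetP sYS) ?eqxx.
Qed.

Lemma CO_run_cluster_subset (Vs : {set V}) (Fs : {set F}) r (SV : {set V}) (SF : {set F}) :
  CO_run E Vs Fs r -> (SV, SF) \in r -> SF \subset Fs.
Proof.
elim=> [|{}Vs {}Fs S {}r _ /and3P[_ /and3P[sSF _ _] _] _ IH] //.
by rewrite inE => /orP[/eqP[_ ->] //|/IH /subset_trans]; apply; apply: subsetDl.
Qed.

Lemma hall_intervene_cluster (Vs : {set V}) (Fs : {set F}) r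
    (SV : {set V}) (SF : {set F}) (p : F -> V) :
  CO_run E Vs Fs r -> hall E Vs Fs -> (SV, SF) \in r ->
  {in SF &, injective p} -> p @: SF = SV ->
  hall (intervene E SF p) Vs Fs.
Proof.
move=> run; elim: run SV SF => [|{}Vs {}Fs S {}r _ minS run IH] SV SF //.
case/and3P: minS => _ /and3P[sSF /eqP tightS _] _ hallVF.
have hallD := hall_setD hallVF sSF tightS.
rewrite inE => /orP[/eqP[-> ->] injp imp|inr injp imp];
  apply: (hall_glue (adj_subset E Vs S) sSF).
- by rewrite -imp; apply: hall_intervene_matching.
- by apply: hall_intervene_disjoint hallD; rewrite disjoints_subset subsetDr.
- have sSFD := CO_run_cluster_subset run inr.
  apply: hall_intervene_disjoint (hall_adj hallVF sSF).
  by apply: disjointWr sSFD _; rewrite disjoints_subset setCD subsetUr.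
- exact: IH inr injp imp.
Qed.

End Intervention.

Theorem lemma22 (V F : finType) (E : F -> V -> bool) (W : {set V})
    (run : seq ({set V} * {set F})) (SV : {set V}) (SF : {set F}) (p : F -> V) :
  self_contained_graph E (~: W) [set: F] ->
  CO_run E (~: W) [set: F] run ->
  (SV, SF) \in run ->
  [disjoint SV & W] ->
  {in SF &, injective p} ->
  p @: SF = SV ->
  self_contained_graph (intervene E SF p) (~: W) [set: F].
Proof.
(* S \cap W = \emptyset is automatic: every cluster of a run on ~: W avoids W. *)
move=> /self_contained_graphP[cardWF hallWF] hrun inr _ injp imp.
apply/self_contained_graphP; split=> //.
exact: hall_intervene_cluster hrun hallWF inr injp imp.
Qed.
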